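(* Let $D$ be a nonempty domain, let $\mathcal I_1$ be a set of unary predicates on $D$ and $\mathcal I_2$ a set of binary predicates on $D$. Let $\bar L\ge 0$ and $\bar H\ge 1$ be integers. Then every predicate in $\mathcal{FOET}_{\{\bar L,\bar H\}}(\mathcal I_1,\mathcal I_2)$ is computed by some join-chain computation with $\bar L$ layers and at most $\bar H$ heads per layer, with input $\mathcal I_1$ and binary predicates from $\mathcal I_2$.
   Context: All predicates are interpreted on $D$; an empty conjunction is the constant-true predicate. $\mathcal{FOET}(\mathcal I_1,\mathcal I_2)$: the set of unary predicates $P(y_0)$ (free variable $y_0$) that are logically equivalent to a formula $$P(y_0)=\exists y_1\cdots\exists y_T\ \bigvee_{m=1}^{M}\Big[\Big(\bigwedge_{t\in\mathcal N^m}P^m_t(y_t)\Big)\wedge\Big(\bigwedge_{(t_p,t_c)\in\mathcal E^m}W^m_{(t_p,t_c)}(y_{t_p},y_{t_c})\Big)\wedge Q^m\Big]$$ in which: each $\mathcal N^m\subseteq\{0,\dots,T\}$ contains $0$; each $\mathcal E^m$ is a set of pairs $(t_p,t_c)$ of elements of $\mathcal N^m$ such that the graph $\mathcal G^m=(\mathcal N^m,\mathcal E^m)$ is a tree, regarded as rooted at $0$ with $t_p$ the parent of $t_c$ for each edge; each $W^m_{(t_p,t_c)}\in\mathcal I_2$; each $P^m_t$ is a finite conjunction of predicates from $\mathcal I_1$; and each $Q^m$ is a propositional constant (true or false). Height and width: for the tree $\mathcal G^m$ let $L^m$ be its height (the maximum number of edges on a path from the root $0$ to a vertex) and $H^m$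 its number of leaf nodes. The height of the predicate is $L=\max_m L^m$ and its width is $H=\sum_m H^m$. $\mathcal{FOET}_{\{\bar L,\bar H\}}(\mathcal I_1,\mathcal I_2)$ is the set of predicates in $\mathcal{FOET}(\mathcal I_1,\mathcal I_2)$ admitting such a representation with $L\le\bar L$ and $H\le\bar H$. Join operation: for a binary predicate $W$ and unary predicate $R$, the join is the unary predicate $x\mapsto\exists y\in D\,(W(x,y)\wedge R(y))$. Join-chain computation with $\bar L$ layers and at most $\bar H$ heads per layer (symbolic model of the network consisting of stacked multi-head self-attention blocks, each head's attention matrix representing a binary predicate and its value tensor a unary predicate, with a skip connection and an aggregation/feed-forward step after each block): let $\mathcal C_0$ be the set of all finite conjunctions of predicates in $\mathcal I_1$. For $l=1,\dots,\bar L$, layer $l$ consists of at most $\bar H$ heads; head $k$ selects some $W\in\mathcal I_2$ and some $R\in\mathcal C_{l-1}$ and outputs the join $J_{l,k}(x)=\exists y\,(W(x,y)\wedge R(y))$; then (skip connection plus aggregation) $\mathcal C_l$ is the set of all finite conjunctions of predicates from $\mathcal C_{l-1}\cup\{J_{l,k}\}_k$. The output of the computation is a predicate of the form $x\mapsto\bigvee_{m=1}^{M}(R_m(x)\wedge q_m)$ with $R_m\in\mathcal C_{\bar L}$ and $q_m$ propositional constants. A unary predicate is computed by such a computation if it equals (on $D$) the output for some choice of heads and final disjunction. (Standing assumption of the paper: every $W\in\mathcal I_2$ is a function of some subset of the inputs $\mathcal I_1$, so that the heads may realize any $W\in\mathcal I_2$; this is built into the model above by allowing heads to select any $W\in\mathcal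 I_2$.) *)

From mathcomp Require Import all_boot.
From Stdlib Require List.
Set Implicit Arguments. Unset Strict Implicit. Unset Printing Implicit Defensive.

Section Defs.
Variable D : Type.

Definition conjs (l : seq (D -> Prop)) : D -> Prop :=
  fun x => forall p, List.In p l -> p x.

Definition conj_closure (S : (D -> Prop) -> Prop) : (D -> Prop) -> Prop :=
  fun R => exists l : seq (D -> Prop),
      (forall p, List.In p l -> S p) /\ (forall x, R x <-> conjs l x).

Definition join (W : D -> D -> Prop) (R : D -> Prop) : D -> Prop :=
  fun x => exists y, W x y /\ R y.

Definition rooted_tree (T : nat) (N : {set 'I_T.+1}) (E : {set 'I_T.+1 * 'I_T.+1}) : Prop :=
  [/\ ord0 \in N,
      (forall e, e \in E -> (e.1 \in N) && (e.2 \in N)),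
      (forall tp, (tp, ord0) \notin E),
      (forall t, t \in N -> t != ord0 ->
         exists tp, (tp, t) \in E /\ forall tp', (tp', t) \in E -> tp' = tp) &
      (forall t, t \in N -> connect (fun a b => (a, b) \in E) ord0 t)].

Definition tree_height_le (T : nat) (E : {set 'I_T.+1 * 'I_T.+1}) (L : nat) : Prop :=
  forall s : seq 'I_T.+1, path (fun a b => (a, b) \in E) ord0 s -> size s <= L.

Definition nleaves (T : nat) (N : {set 'I_T.+1}) (E : {set 'I_T.+1 * 'I_T.+1}) : nat :=
  #|[set t in N | [forall c : 'I_T.+1, (t, c) \notin E]]|.

(* The matrix of the FOET formula with T+1 variables y_0..y_T and M disjuncts. *)
Definition foet_formula (T M : nat)
    (N : 'I_M -> {set 'I_T.+1}) (E : 'I_M -> {set 'I_T.+1 * 'I_T.+1})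
    (P : 'I_M -> 'I_T.+1 -> seq (D -> Prop))
    (W : 'I_M -> 'I_T.+1 -> 'I_T.+1 -> (D -> D -> Prop))
    (Q : 'I_M -> bool) : D -> Prop :=
  fun y0 => exists y : 'I_T.+1 -> D, y ord0 = y0 /\
    exists m : 'I_M,
      (forall t, t \in N m -> conjs (P m t) (y t)) /\
      (forall tp tc, (tp, tc) \in E m -> W m tp tc (y tp) (y tc)) /\
      Q m.

Definition in_FOET (I1 : (D -> Prop) -> Prop) (I2 : (D -> D -> Prop) -> Prop)
    (Lb Hb : nat) (Pr : D -> Prop) : Prop :=
  exists (T M : nat)
    (N : 'I_M -> {set 'I_T.+1}) (E : 'I_M -> {set 'I_T.+1 * 'I_T.+1})
    (P : 'I_M -> 'I_T.+1 -> seq (D -> Prop))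
    (W : 'I_M -> 'I_T.+1 -> 'I_T.+1 -> (D -> D -> Prop))
    (Q : 'I_M -> bool),
    (forall m, rooted_tree (N m) (E m)) /\
    (forall m tp tc, (tp, tc) \in E m -> I2 (W m tp tc)) /\
    (forall m t p, List.In p (P m t) -> I1 p) /\
    (forall m, tree_height_le (E m) Lb) /\
    (\sum_(m < M) nleaves (N m) (E m) <= Hb)%N /\
    (forall x, Pr x <-> foet_formula N E P W Q x).

Definition layer_step (C : (D -> Prop) -> Prop)
    (heads : seq ((D -> D -> Prop) * (D -> Prop))) : (D -> Prop) -> Prop :=
  conj_closure (fun p => C p \/ exists h, List.In h heads /\ p = join h.1 h.2).

Inductive chain (I1 : (D -> Prop) -> Prop) (I2 : (D -> D -> Prop) -> Prop) (Hb : nat)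
  : nat -> ((D -> Prop) -> Prop) -> Prop :=
| chain0 : chain I1 I2 Hb 0 (conj_closure I1)
| chainS l C heads :
    chain I1 I2 Hb l C ->
    (size heads <= Hb)%N ->
    (forall h, List.In h heads -> I2 h.1 /\ C h.2) ->
    chain I1 I2 Hb l.+1 (layer_step C heads).

Definition computed_by_chain (I1 : (D -> Prop) -> Prop) (I2 : (D -> D -> Prop) -> Prop)
    (Lb Hb : nat) (Pr : D -> Prop) : Prop :=
  exists C, chain I1 I2 Hb Lb C /\
    exists outs : seq ((D -> Prop) * bool),
      (forall o, List.In o outs -> C o.1) /\
      (forall x, Pr x <-> exists o, List.In o outs /\ o.1 x /\ o.2).

End Defs.

From mathcomp Require Import all_boot.
From Stdlib Require Import IndefiniteDescription.
Set Implicit Arguments. Unset Strict Implicit. Unset Printing Implicit Defensive.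

(* Read each tree of the formula bottom-up: the predicate attached to a vertex v
   with depth budget k is the conjunction of the atoms at v with one join
   [exists z, W (v, c) (x, z) /\ pred_c z] per child c, so a tree of height at
   most L is evaluated by L layers: the last one computes the joins along the
   edges out of the roots, the one before along the edges at depth one, and so
   on.  The edges at a fixed depth lead into pairwise disjoint subtrees, each
   containing a leaf, so no layer needs more heads than the formula has leaves.
   Conversely, the joins recover the existential formula because witnesses
   chosen independently in disjoint subtrees glue into a single assignment of
   the variables. *)

Lemma InP (A : eqType) (x : A) (s : seq A) : reflect (List.In x s) (x \in s).
Proof.
elim: s => [|a s IH]; first by constructor.
rewrite in_cons; apply: (iffP orP) => [[/eqP ->|/IH]|[->|/IH]];
  by [left|right|rewrite eqxx|rewrite orbT].
Qed.

Lemma In_map (A B : Type) (f : A -> B) (s : seq A) y :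
  List.In y (map f s) <-> exists2 x, List.In x s & y = f x.
Proof.
elim: s => [|a s IH] /=; first by split=> // [[]].
rewrite IH; split=> [[<-|[x sx ->]]|[x [<-|sx] ->]];
  by [exists a; first left|exists x; first right|left|right; exists x].
Qed.

Lemma In_cat (A : Type) (x : A) (s1 s2 : seq A) :
  List.In x (s1 ++ s2) <-> List.In x s1 \/ List.In x s2.
Proof. exact: List.in_app_iff. Qed.

Section Forest.
Variables (V : finType) (e : rel V).

Definition height_le (v : V) (k : nat) := forall s, path e v s -> size s <= k.

Lemma height_le_child v c k : height_le v k.+1 -> e v c -> height_le c k.
Proof. by move=> h vc s cs; apply: (h (c :: s)); rewrite /= vc. Qed.

Lemma height_le0_childless v c : height_le v 0 -> ~~ e v c.
Proof. by move=> h; apply/negP => vc; move: (h [:: c]); rewrite /= vc => /(_ isT). Qed.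

Lemma connect_height_le0 v u : height_le v 0 -> connect e v u -> u = v.
Proof. by move=> h /connectP [[|c s] cs ->] //; have := h _ cs. Qed.

Lemma connect_via_child v u : connect e v u -> u != v -> exists2 c, e v c & connect e c u.
Proof.
move=> /connectP [[|c s] /= ps ->]; first by rewrite eqxx.
by case/andP: ps => vc cs _; exists c => //; apply/connectP; exists s.
Qed.

Lemma cycle_long_paths v s : path e v s -> last v s = v -> s != [::] ->
  forall n, exists2 s', path e v s' & n <= size s'.
Proof.
move=> vs sv s_nil; elim=> [|n [s' vs' n_s']]; first by exists [::].
exists (s ++ s'); first by rewrite cat_path vs sv vs'.
by rewrite size_cat -add1n leq_add // lt0n size_eq0.
Qed.

Lemma height_le_acyclic v c k : height_le v k -> e v c -> ~ connect e c v.
Proof.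
move=> h vc /connectP [s cs sv].
have [s' vs' k_s'] : exists2 s', path e v s' & k.+1 <= size s'.
  by apply: (@cycle_long_paths v (c :: s)); rewrite /= ?vc -?sv.
by have := h _ vs'; rewrite leqNgt k_s'.
Qed.

Hypothesis parent_uniq : forall p p' c, e p c -> e p' c -> p = p'.

Lemma connect_comparable a b u :
  connect e a u -> connect e b u -> connect e a b \/ connect e b a.
Proof.
move=> /connectP [s]; elim/last_ind: s u => [|s x IH] u /= pa ->; first by right.
move: pa; rewrite rcons_path last_rcons => /andP [pa ex] /connectP [t].
case/lastP: t => [|t x'] pb /= bx.
  by left; apply/connectP; exists (rcons s x); rewrite ?rcons_path ?pa ?ex ?last_rcons.
move: pb bx; rewrite rcons_path last_rcons => /andP [pb ex'] xx'; subst x'.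
rewrite (parent_uniq ex ex') in IH; apply: (IH (last b t)) => //.
by apply/connectP; exists t.
Qed.

Lemma connect_to_parent a b p : connect e a b -> a != b -> e p b -> connect e a p.
Proof.
move=> /connectP [t]; case/lastP: t => [|t x] pt ->; first by rewrite eqxx.
move: pt; rewrite rcons_path last_rcons => /andP [pt ex] _ px.
by rewrite (parent_uniq px ex); apply/connectP; exists t.
Qed.

Lemma child_subtrees_disjoint v k c c' u : height_le v k -> e v c -> e v c' ->
  connect e c u -> connect e c' u -> c = c'.
Proof.
move=> h vc vc' cu c'u; have [cc'|c'c] := connect_comparable cu c'u.
  have [//|neq] := eqVneq c c'.
  by case: (height_le_acyclic h vc (connect_to_parent cc' neq vc')).
have [->|neq] := eqVneq c' c => //.
by case: (height_le_acyclic h vc' (connect_to_parent c'c neq vc)).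
Qed.

Definition leaf (v : V) := [forall c, ~~ e v c].
Definition leaves_below (v : V) := #|[pred w | connect e v w && leaf w]|.
Definition children (v : V) := enum [pred c | e v c].

Lemma mem_children v c : (c \in children v) = e v c.
Proof. by rewrite mem_enum. Qed.

Lemma leaves_below_connect v u : connect e v u -> leaves_below u <= leaves_below v.
Proof.
move=> vu; apply: subset_leq_card; apply/subsetP => w /andP [uw wl].
by rewrite inE /= (connect_trans vu uw).
Qed.

Lemma leaves_below_gt0 v k : height_le v k -> 0 < leaves_below v.
Proof.
elim: k v => [|k IH] v h.
  apply/card_gt0P; exists v; rewrite inE /= connect0; apply/forallP => c.
  exact: height_le0_childless h.
have [lv|/forallPn [c /negbNE vc]] := boolP (leaf v).
  by apply/card_gt0P; exists v; rewrite inE /= connect0.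
exact: leq_trans (IH c (height_le_child h vc)) (leaves_below_connect (connect1 vc)).
Qed.

Lemma sum_leaves_below_children v k : height_le v k ->
  \sum_(c <- children v) leaves_below c <= leaves_below v.
Proof.
move=> h; rewrite big_enum /= /leaves_below.
under eq_bigr => c _ do rewrite -sum1_card big_mkcond /=.
rewrite exchange_big -sum1_card [X in _ <= X]big_mkcond /=.
apply: leq_sum => w _.
have [/existsP [c0 /andP [vc0 c0w]]|none] := boolP [exists c, e v c && connect e c w].
  rewrite (bigD1 c0) //= big1 ?addn0 => [|c /andP [vc neq]].
    by rewrite !inE /= c0w (connect_trans (connect1 vc0) c0w).
  rewrite inE /=; case: (boolP (connect e c w)) => //= cw.
  by rewrite (child_subtrees_disjoint h vc vc0 cw c0w) eqxx in neq.
rewrite big1 // => c; rewrite !inE /= => vc; case: (boolP (connect e c w)) => //= cw.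
by move/existsPn: none => /(_ c); rewrite vc cw.
Qed.

Lemma size_children_le_leaves v k : height_le v k -> size (children v) <= leaves_below v.
Proof.
move=> h; apply: leq_trans (sum_leaves_below_children h).
rewrite -sum1_size !big_seq; apply: leq_sum => c; rewrite mem_children => vc.
case: k h => [|k] h; first by rewrite (negbTE (height_le0_childless c h)) in vc.
exact: leaves_below_gt0 (height_le_child h vc).
Qed.

Section SubtreePredicates.
Variables (D : Type) (P : V -> seq (D -> Prop)) (W : V -> V -> D -> D -> Prop).

Fixpoint subtree_pred (k : nat) (v : V) (x : D) : Prop :=
  conjs (P v) x /\
  if k is k'.+1 then forall c, e v c -> join (W v c) (subtree_pred k' c) x else True.

Definition subtree_sat (v : V) (y : V -> D) :=
  (forall u, connect e v u -> conjs (P u) (y u)) /\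
  (forall p q, connect e v p -> e p q -> W p q (y p) (y q)).

Lemma subtree_sat_child v c y : subtree_sat v y -> e v c -> subtree_sat c y.
Proof.
move=> [satP satW] vc; have vcc := connect_trans (connect1 vc).
by split=> [u cu|p q cp pq]; [apply: satP; apply: vcc|apply: satW => //; apply: vcc].
Qed.

Lemma subtree_pred_of_sat k v y : subtree_sat v y -> subtree_pred k v (y v).
Proof.
elim: k v => [|k IH] v sat; (split; first exact: sat.1 v (connect0 e v)) => //.
move=> c vc; exists (y c); split; last exact: IH _ (subtree_sat_child sat vc).
exact: sat.2 _ _ (connect0 e v) vc.
Qed.

(* Distinct children have disjoint subtrees, so [y] below is well defined. *)
Lemma subtree_sat_glue k v x (Y : V -> V -> D) : height_le v k -> conjs (P v) x ->
  (forall c, e v c -> W v c x (Y c c) /\ subtree_sat c (Y c)) ->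
  exists2 y, y v = x & subtree_sat v y.
Proof.
move=> h Pvx hY.
pose y u := if u == v then x else
  if [pick c | e v c && connect e c u] is Some c then Y c u else x.
have yv : y v = x by rewrite /y eqxx.
have yY c u : e v c -> connect e c u -> y u = Y c u.
  move=> vc cu; rewrite /y; case: eqP => [uv|_].
    by subst u; case: (height_le_acyclic h vc cu).
  case: pickP => [c' /andP [vc' c'u]|/(_ c)]; last by rewrite vc cu.
  by rewrite (child_subtrees_disjoint h vc' vc c'u cu).
exists y => //; split.
  move=> u vu; have [->|uv] := eqVneq u v; first by rewrite yv.
  have [c vc cu] := connect_via_child vu uv.
  by rewrite (yY c u vc cu); apply: (hY c vc).2.1.
move=> p q vp pq; have [pv|pv] := eqVneq p v.
  by subst p; rewrite yv (yY q q pq (connect0 e q)); apply: (hY q pq).1.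
have [c vc cp] := connect_via_child vp pv.
rewrite (yY c p vc cp) (yY c q vc (connect_trans cp (connect1 pq))).
exact: (hY c vc).2.2 _ _ cp pq.
Qed.

Lemma subtree_sat_of_pred k v x : height_le v k -> subtree_pred k v x ->
  exists2 y, y v = x & subtree_sat v y.
Proof.
elim: k v x => [|k IH] v x h [Pvx sub].
  exists (fun=> x) => //.
  split=> [u /(connect_height_le0 h) -> //|p q /(connect_height_le0 h) -> pq].
  by rewrite (negbTE (height_le0_childless q h)) in pq.
have [Y hY] : exists Y : V -> V -> D,
    forall c, e v c -> W v c x (Y c c) /\ subtree_sat c (Y c).
  apply: (functional_choice
    (fun c Yc => e v c -> W v c x (Yc c) /\ subtree_sat c Yc)) => c.
  have [vc|_] := boolP (e v c); last by exists (fun=> x).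
  have [z [Wz subz]] := sub c vc.
  by have [yc ycz satc] := IH c z (height_le_child h vc) subz; exists yc; rewrite ycz.
exact: subtree_sat_glue h Pvx hY.
Qed.

Lemma subtree_predS k v x : subtree_pred k.+1 v x <->
  conjs (P v ++ [seq join (W v c) (subtree_pred k c) | c <- children v]) x.
Proof.
split=> [[Pvx sub] p /In_cat [Pp|/In_map [c vc ->]]|all].
- exact: Pvx.
- by apply: sub; rewrite -mem_children; apply/InP.
- split=> [p Pp|c vc]; apply: all; apply/In_cat; [by left|right].
  by apply/In_map; exists c => //; apply/InP; rewrite mem_children.
Qed.

End SubtreePredicates.
End Forest.

Section JoinChain.
Variables (D : Type) (I1 : (D -> Prop) -> Prop) (I2 : (D -> D -> Prop) -> Prop) (Hb : nat).

Lemma conj_closure_base (S : (D -> Prop) -> Prop) p : S p -> conj_closure S p.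
Proof.
exists [:: p]; split=> [q [<-|[]] //|x]; split=> [px q [<-|[]] //|all].
by apply: all; left.
Qed.

Lemma chain_input k C p : chain I1 I2 Hb k C -> I1 p -> C p.
Proof.
by move=> ch Ip; elim: ch => [|l C' heads _ IH _ _]; apply: conj_closure_base; [|left].
Qed.

Variables (I : eqType) (V : finType) (e : I -> rel V).
Variables (P : I -> V -> seq (D -> Prop)) (W : I -> V -> V -> D -> D -> Prop).
Hypothesis parent_uniq : forall i p p' c, e i p c -> e i p' c -> p = p'.
Hypothesis I2W : forall i p c, e i p c -> I2 (W i p c).
Hypothesis I1P : forall i v p, List.In p (P i v) -> I1 p.

Lemma chain_of_subtree_preds k (L : seq (I * V)) :
  (forall iv, iv \in L -> height_le (e iv.1) iv.2 k) ->
  \sum_(iv <- L) leaves_below (e iv.1) iv.2 <= Hb ->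
  exists2 C, chain I1 I2 Hb k C &
    forall iv, iv \in L -> C (subtree_pred (e iv.1) (P iv.1) (W iv.1) k iv.2).
Proof.
pose spred i := subtree_pred (e i) (P i) (W i).
elim: k L => [|k IH] L hL sumL.
  exists (conj_closure I1) => [|[i v] _]; first exact: chain0.
  by exists (P i v); split=> [|x]; [apply: I1P|split=> [[]|]].
have sum_le_Hb (F : I * V -> nat) :
    (forall iv, iv \in L -> F iv <= leaves_below (e iv.1) iv.2) ->
    \sum_(iv <- L) F iv <= Hb.
  move=> FL; apply: leq_trans sumL; rewrite !big_seq; exact: leq_sum.
pose edges := [seq (iv.1, iv.2, c) | iv <- L, c <- children (e iv.1) iv.2].
have mem_edges i v c : ((i, v, c) \in edges) = ((i, v) \in L) && e i v c.
  apply/allpairsPdep/andP => [[[i' v'] [c' [iv' c'v' [-> -> ->]]]]|[iv vc]].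
    by rewrite -mem_children.
  by exists (i, v), c; rewrite mem_children.
have [C chC Cchild] : exists2 C, chain I1 I2 Hb k C &
    forall iv, iv \in [seq (p.1.1, p.2) | p <- edges] -> C (spred iv.1 k iv.2).
  apply: IH => [_ /mapP [[[i v] c] + ->]|].
    by rewrite mem_edges => /andP [/hL hv vc]; exact: height_le_child hv vc.
  rewrite big_map big_allpairs_dep /=; apply: sum_le_Hb => -[i v] /hL /= hv.
  exact: sum_leaves_below_children (@parent_uniq i) _ _ hv.
pose heads := [seq (W p.1.1 p.1.2 p.2, spred p.1.1 k p.2) | p <- edges].
exists (layer_step C heads) => [|[i v] iv].
  apply: chainS => //.
    rewrite size_map -sum1_size big_allpairs_dep /=; apply: sum_le_Hb => -[i v] /hL /= hv.
    by rewrite sum1_size; exact: size_children_le_leaves (@parent_uniq i) _ _ hv.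
  move=> h /In_map [[[i v] c] /InP]; rewrite mem_edges => /andP [iv vc] -> /=.
  split; first exact: I2W vc.
  by apply: (Cchild (i, c)); apply/mapP; exists (i, v, c); rewrite ?mem_edges ?iv.
exists (P i v ++ [seq join (W i v c) (spred i k c) | c <- children (e i) v]).
split; last by move=> x; exact: subtree_predS.
move=> p /In_cat [/I1P Ip|/In_map [c cv ->]]; first by left; exact: chain_input chC Ip.
right; exists (W i v c, spred i k c); split=> //.
apply/In_map; exists (i, v, c) => //; apply/InP.
by rewrite mem_edges iv -(mem_children (e i)); apply/InP.
Qed.

End JoinChain.

Definition edge_rel (V : finType) (E : {set V * V}) : rel V := fun a b => (a, b) \in E.

Section RootedTree.
Variables (T : nat) (N : {set 'I_T.+1}) (E : {set 'I_T.+1 * 'I_T.+1}).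
Hypothesis tree : rooted_tree N E.

Lemma rooted_tree_parent_uniq p p' c : edge_rel E p c -> edge_rel E p' c -> p = p'.
Proof.
case: tree => _ edgeN root_orphan parent _ pc p'c.
have cN : c \in N by case/andP: (edgeN _ pc).
have c0 : c != ord0 by apply/eqP => c0; move: (root_orphan p); rewrite -c0 => /negP; apply.
by have [tp [_ tp_uniq]] := parent c cN c0; rewrite (tp_uniq _ pc) (tp_uniq _ p'c).
Qed.

Lemma rooted_tree_connect_mem w : connect (edge_rel E) ord0 w -> w \in N.
Proof.
case: tree => rootN edgeN _ _ _ /connectP [s].
case/lastP: s => [|s x] ps ->; first exact: rootN.
by move: ps; rewrite rcons_path last_rcons => /andP [_ /edgeN /andP []].
Qed.

Lemma leaves_below_root : leaves_below (edge_rel E) ord0 <= nleaves N E.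
Proof.
apply: subset_leq_card; apply/subsetP => w /andP [rw wleaf].
by rewrite inE (rooted_tree_connect_mem rw).
Qed.

Lemma subtree_pred_root (D : Type) (P : 'I_T.+1 -> seq (D -> Prop))
    (W : 'I_T.+1 -> 'I_T.+1 -> D -> D -> Prop) L x : tree_height_le E L ->
  subtree_pred (edge_rel E) P W L ord0 x <-> exists y, y ord0 = x /\
    (forall t, t \in N -> conjs (P t) (y t)) /\
    (forall tp tc, (tp, tc) \in E -> W tp tc (y tp) (y tc)).
Proof.
case: tree => _ edgeN _ _ reach height; split.
  move=> /(subtree_sat_of_pred rooted_tree_parent_uniq height) [y y0 [satP satW]].
  exists y; split=> //; split=> [t tN|tp tc tpc]; first by apply: satP; apply: reach.
  by apply: (satW _ _ _ tpc); apply: reach; case/andP: (edgeN _ tpc).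
move=> [y [<- [yP yW]]]; apply: subtree_pred_of_sat.
by split=> [u /rooted_tree_connect_mem/yP|p q _ /yW].
Qed.

End RootedTree.

Lemma foet_formulaE (D : Type) T M (N : 'I_M -> {set 'I_T.+1})
    (E : 'I_M -> {set 'I_T.+1 * 'I_T.+1}) (P : 'I_M -> 'I_T.+1 -> seq (D -> Prop))
    (W : 'I_M -> 'I_T.+1 -> 'I_T.+1 -> D -> D -> Prop) (Q : 'I_M -> bool) L x :
  (forall m, rooted_tree (N m) (E m)) -> (forall m, tree_height_le (E m) L) ->
  foet_formula N E P W Q x <->
  exists m, subtree_pred (edge_rel (E m)) (P m) (W m) L ord0 x /\ Q m.
Proof.
move=> tree height.
have root m := subtree_pred_root (tree m) (P m) (W m) x (height m).
split=> [[y [y0 [m [yP [yW Qm]]]]]|[m [/root [y [y0 [yP yW]]] Qm]]].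
  by exists m; split=> //; apply/root; exists y.
by exists y; split=> //; exists m.
Qed.

Theorem theorem2 (D : Type) (hD : inhabited D)
    (I1 : (D -> Prop) -> Prop) (I2 : (D -> D -> Prop) -> Prop)
    (Lb Hb : nat) (hHb : (1 <= Hb)%N) (Pr : D -> Prop) :
  in_FOET I1 I2 Lb Hb Pr -> computed_by_chain I1 I2 Lb Hb Pr.
Proof.
move=> [T [M [N [E [P [W [Q [tree [I2W [I1P [height [leaves PrE]]]]]]]]]]]].
pose roots := [seq (m, ord0 : 'I_T.+1) | m <- index_enum 'I_M].
have roots_height iv : iv \in roots -> height_le (edge_rel (E iv.1)) iv.2 Lb.
  by move=> /mapP [m _ ->]; exact: height.
have roots_leaves : \sum_(iv <- roots) leaves_below (edge_rel (E iv.1)) iv.2 <= Hb.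
  rewrite big_map; apply: leq_trans leaves; apply: leq_sum => m _.
  exact: leaves_below_root.
have [C chC Croots] :=
  @chain_of_subtree_preds _ _ _ _ _ _ (fun m => edge_rel (E m)) P W
    (fun m => rooted_tree_parent_uniq (tree m)) I2W I1P _ _ roots_height roots_leaves.
exists C; split=> //.
exists [seq (subtree_pred (edge_rel (E m)) (P m) (W m) Lb ord0, Q m) | m <- index_enum 'I_M].
split=> [o /In_map [m _ ->]|x].
  by apply: (Croots (m, ord0)); apply: map_f; rewrite mem_index_enum.
rewrite PrE foet_formulaE //.
split=> [[m [xm Qm]]|[o [/In_map [m _ ->] [xm Qm]]]]; last by exists m.
exists (subtree_pred (edge_rel (E m)) (P m) (W m) Lb ord0, Q m); split=> //.
by apply/In_map; exists m => //; apply/InP; rewrite mem_index_enum.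
Qed.
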